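(* In the allocation problem described in the context, let $\eta_1,\ldots,\eta_n$ be speed functions and let $a^\pi$ be the allocation produced by the extended SG mechanism with these speeds when every agent $i$ bids its true list $\pi_i$. Then $a^\pi$ is Pareto optimal: there is no allocation $a$ such that every agent $i$ weakly prefers $a_{i*}$ to $a^\pi_{i*}$ (i.e., $a_{i*}=a^\pi_{i*}$ or $a_{i*}>_i a^\pi_{i*}$) and some agent $i$ has $a_{i*}>_i a^\pi_{i*}$.
   Context: There are $m$ distinct divisible goods; good $j$ is available in amount $q_j>0$. There are $n$ agents; agent $i$ is to receive a total of $r_i>0$, with $\sum_j q_j=\sum_i r_i$. An allocation is a family $a_{ij}\ge 0$ with $\sum_j a_{ij}=r_i$ and $\sum_i a_{ij}=q_j$; $a_{i*}=(a_{i1},\ldots,a_{im})$ is agent $i$'s share. Each agent $i$ has a true preference list $\pi_i$, a permutation of the goods ($\pi_i(1)$ most preferred). Agent $i$ prefers $a_{i*}$ to $b_{i*}$, written $a_{i*}>_i b_{i*}$, if the leftmost nonzero coordinate of $(a_{i\pi_i(\ell)}-b_{i\pi_i(\ell)})_{\ell=1}^m$ is positive. A speed function for agent $i$ is a nonnegative integrable function $\eta_i:[0,1]\to\mathbb{R}_{\ge 0}$ with $\int_0^1\eta_i(t)\,dt=r_i$. The extended SG mechanism with speeds $\eta_1,\ldots,\eta_n$: each agent $i$ bids a permutation $\sigma_i$ of the goods; over time $t\in[0,1]$, each agent $i$ receives, at rate $\eta_i(t)$, the good highest in $\sigma_i$ among those not yet exhausted (a good is exhausted when the total amount handed out equals $q_j$;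 several agents may receive a good simultaneously; upon exhaustion, agents receiving it switch to their next non-exhausted good). The resulting allocation records the total amount of each good each agent receives. *)

From HB Require Import structures.
From mathcomp Require Import all_boot all_order all_algebra all_fingroup.
From mathcomp Require Import all_classical all_reals all_analysis.
Set Implicit Arguments. Unset Strict Implicit. Unset Printing Implicit Defensive.
Import Order.TTheory GRing.Theory Num.Theory.
Local Open Scope ring_scope.
Local Open Scope classical_set_scope.

Section Alloc.
Variables (R : realType) (n m : nat).

Definition is_allocation (q : 'I_m -> R) (r : 'I_n -> R)
    (a : 'I_n -> 'I_m -> R) : Prop :=
  [/\ forall i j, 0 <= a i j,
      forall i, \sum_(j < m) a i j = r i &
      forall j, \sum_(i < n) a i j = q j].

(* A preference list is a permutation p of the goods; p l is the good ranked at
   position l (position 0 = most preferred).  lex_pref p x y : x >_p y, i.e. the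
   leftmost nonzero coordinate of (x (p l) - y (p l))_l is positive. *)
Definition lex_pref (p : {perm 'I_m}) (x y : 'I_m -> R) : Prop :=
  exists l : 'I_m,
    (forall k : 'I_m, (k < l)%N -> x (p k) = y (p k)) /\ y (p l) < x (p l).

Definition eating (sigma : 'I_n -> {perm 'I_m}) (tau : 'I_m -> R)
    (i : 'I_n) (s : R) (j : 'I_m) : bool :=
  (s < tau j) &&
  [forall k : 'I_m, ((sigma i)^-1%g k < (sigma i)^-1%g j)%N ==> (tau k <= s)].

Definition received (eta : 'I_n -> R -> R) (sigma : 'I_n -> {perm 'I_m})
    (tau : 'I_m -> R) (i : 'I_n) (j : 'I_m) (t : R) : \bar R :=
  (\int[@lebesgue_measure R]_(s in `[0%R, t])
      (eta i s * (eating sigma tau i s j)%:R)%:E)%E.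

Definition consumed (eta : 'I_n -> R -> R) (sigma : 'I_n -> {perm 'I_m})
    (tau : 'I_m -> R) (j : 'I_m) (t : R) : \bar R :=
  (\sum_(i < n) received eta sigma tau i j t)%E.

Definition speed_function (r : 'I_n -> R) (eta : 'I_n -> R -> R) : Prop :=
  forall i,
    [/\ forall t, 0 <= t <= 1 -> 0 <= eta i t,
        (@lebesgue_measure R).-integrable `[0%R, 1%R] (EFin \o eta i) &
        (\int[@lebesgue_measure R]_(t in `[0%R, 1%R]) (eta i t)%:E
           = (r i)%:E)%E].

(* a is the allocation produced by the extended SG mechanism with speeds eta when
   agent i bids sigma i: there are exhaustion times tau j in [0,1], tau j being the
   first time at which the total amount of good j handed out reaches q j, where at
   each time every agent receives, at rate eta i, its highest-ranked
   non-exhausted good; a i j is the total amount of good j agent i receives. *)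
Definition SG_outcome (q : 'I_m -> R) (eta : 'I_n -> R -> R)
    (sigma : 'I_n -> {perm 'I_m}) (a : 'I_n -> 'I_m -> R) : Prop :=
  exists tau : 'I_m -> R,
    [/\ forall j, 0 <= tau j <= 1,
        forall j, consumed eta sigma tau j (tau j) = (q j)%:E,
        forall j t, 0 <= t -> t < tau j -> (consumed eta sigma tau j t < (q j)%:E)%E &
        forall i j, (a i j)%:E = received eta sigma tau i j 1].

Definition pareto_optimal (q : 'I_m -> R) (r : 'I_n -> R)
    (pi : 'I_n -> {perm 'I_m}) (b : 'I_n -> 'I_m -> R) : Prop :=
  ~ exists a : 'I_n -> 'I_m -> R,
      [/\ is_allocation q r a,
          forall i, a i = b i \/ lex_pref (pi i) (a i) (b i) &
          exists i, lex_pref (pi i) (a i) (b i)].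

End Alloc.

(* Let tau j be the exhaustion time of good j under truthful bidding. An agent
   only receives j while every good it prefers to j is already exhausted, so it
   never holds j if it prefers some good k with tau j <= tau k. Take a Pareto
   improvement a and proceed through the goods by increasing exhaustion time:
   if a agrees with the SG outcome on all goods exhausted before j, then for
   each agent holding j these include all goods it prefers to j, and weak lexico-
   graphic preference forces a i j >= a^pi i j; both columns sum to q j, so the
   column of j agrees too. Hence a = a^pi and no agent strictly improves. *)

From HB Require Import structures.
From mathcomp Require Import all_boot all_order all_algebra all_fingroup.
From mathcomp Require Import all_classical all_reals all_analysis.

Set Implicit Arguments.
Unset Strict Implicit.
Unset Printing Implicit Defensive.

Import Order.TTheory GRing.Theory Num.Theory.
Local Open Scope ring_scope.

Lemma eq_of_le_sum (R : numDomainType) (I : finType) (F G : I -> R) :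
  (forall i, F i <= G i) -> \sum_i F i = \sum_i G i -> forall i, F i = G i.
Proof.
move=> FG sumFG i; apply/eqP; rewrite eq_sym -subr_eq0; apply/eqP.
apply: (@psumr_eq0P _ _ predT (fun i => G i - F i)) => //.
  by move=> k _; rewrite subr_ge0.
by rewrite sumrB sumFG subrr.
Qed.

Lemma finite_key_ind (R : realDomainType) (T : finType) (f : T -> R)
    (P : T -> Prop) :
  (forall j, (forall k, f k < f j -> P k) -> P j) -> forall j, P j.
Proof.
move=> IH j; move: {2}#|_| (leqnn #|[set k | f k < f j]|) => N.
elim: N j => [|N IHN] j hj; apply: IH => k hk.
  by move: hj; rewrite leqn0 => /eqP/cards0_eq/setP/(_ k); rewrite !inE hk.
apply: IHN; rewrite -ltnS; apply: leq_trans hj; apply: proper_card.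
apply/properP; split; last by exists k; rewrite !inE ?hk // ltxx.
by apply/fintype.subsetP => x; rewrite !inE => hx; exact: lt_trans hx hk.
Qed.

Section SerialAllocation.
Variables (R : realType) (n m : nat).
Implicit Types (pi : 'I_n -> {perm 'I_m}) (tau : 'I_m -> R).

Definition serial_support pi tau (b : 'I_n -> 'I_m -> R) : Prop :=
  forall i j k, ((pi i)^-1%g k < (pi i)^-1%g j)%N -> tau j <= tau k -> b i j = 0.

Lemma le_lex_pref_prefix (p : {perm 'I_m}) (x y : 'I_m -> R) j :
  (forall k, (p^-1%g k < p^-1%g j)%N -> x k = y k) ->
  x = y \/ lex_pref p x y -> y j <= x j.
Proof.
move=> prefix [-> // | [l [hl hlt]]].
case: (ltngtP l (p^-1%g j)) => hlj.
- by move: hlt; rewrite prefix ?permK // ltxx.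
- by rewrite -(permKV p j) hl.
- by move: hlt; rewrite (val_inj hlj) permKV => /ltW.
Qed.

Lemma serial_column_agree q pi tau (a b : 'I_n -> 'I_m -> R) j :
  serial_support pi tau b -> (forall i, 0 <= a i j) ->
  \sum_i a i j = q j -> \sum_i b i j = q j ->
  (forall i, a i = b i \/ lex_pref (pi i) (a i) (b i)) ->
  (forall k, tau k < tau j -> forall i, a i k = b i k) ->
  forall i, a i j = b i j.
Proof.
move=> serb a0 suma sumb weak earlier.
suff le_ba i : b i j <= a i j.
  by move=> i; apply/esym/(@eq_of_le_sum _ _ (b^~ j) (a^~ j) le_ba);
    rewrite sumb suma.
case: (pickP (fun k => ((pi i)^-1%g k < (pi i)^-1%g j)%N && (tau j <= tau k)))
  => [k /andP[hk hjk] | outlasted]; first by rewrite (serb i j k hk hjk).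
apply: le_lex_pref_prefix (weak i) => k hk; apply: earlier.
by move: (outlasted k); rewrite hk /= ltNge => ->.
Qed.

Lemma serial_pareto_optimal q r pi tau (b : 'I_n -> 'I_m -> R) :
  serial_support pi tau b -> (forall j, \sum_i b i j = q j) ->
  pareto_optimal q r pi b.
Proof.
move=> serb sumb [a [[a0 _ suma] weak [i0 [l [_ strict]]]]].
have a_eq_b : forall j i, a i j = b i j.
  elim/(@finite_key_ind _ _ tau) => j earlier.
  exact: serial_column_agree serb (a0^~ j) (suma j) (sumb j) weak earlier.
by move: strict; rewrite a_eq_b ltxx.
Qed.

End SerialAllocation.

Section SGMechanism.
Variables (R : realType) (n m : nat) (eta : 'I_n -> R -> R).
Variables (pi : 'I_n -> {perm 'I_m}) (tau : 'I_m -> R).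

Lemma received_eq0_of_outlasted i j k t :
  ((pi i)^-1%g k < (pi i)^-1%g j)%N -> tau j <= tau k ->
  received eta pi tau i j t = 0%E.
Proof.
move=> hk hjk; apply: integral0_eq => s _.
suff /negbTE -> : ~~ eating pi tau i s j by rewrite mulr0.
apply/negP => /andP[hs /forallP/(_ k)]; rewrite hk /= => hks.
by move: hs; rewrite ltNge (le_trans hjk hks).
Qed.

Lemma received_exhaustion i j :
  0 <= tau j <= 1 -> received eta pi tau i j 1 = received eta pi tau i j (tau j).
Proof.
move=> /andP[tau0 tau1]; rewrite /received [LHS]integral_mkcond [RHS]integral_mkcond.
congr (integral _ _ _); apply/funext => s; rewrite /patch.
have in_itv0 (t : R) : (s \in `[0, t]%classic) = (0 <= s <= t).
  by apply/idP/idP; rewrite in_setE /= in_itv.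
rewrite !in_itv0; case: (boolP (0 <= s <= tau j)) => [/andP[s0 sj] | stau].
  by rewrite s0 (le_trans sj tau1).
case: (boolP (0 <= s <= 1)) => // /andP[s0 _].
have taus : tau j < s by rewrite ltNge; move: stau; rewrite s0.
suff /negbTE -> : ~~ eating pi tau i s j by rewrite mulr0.
by rewrite /eating negb_and -leNgt ltW.
Qed.

End SGMechanism.

Lemma SG_outcome_serial (R : realType) (n m : nat) (q : 'I_m -> R)
    (eta : 'I_n -> R -> R) (pi : 'I_n -> {perm 'I_m}) (api : 'I_n -> 'I_m -> R) :
  SG_outcome q eta pi api ->
  exists tau, serial_support pi tau api /\ forall j, \sum_i api i j = q j.
Proof.
move=> [tau [tau01 tauq _ apiE]]; exists tau; split.
  move=> i j k hk hjk; apply: EFin_inj.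
  by rewrite apiE; apply: received_eq0_of_outlasted hk hjk.
move=> j; apply: EFin_inj; rewrite -sumEFin -(tauq j).
by apply: eq_bigr => i _; rewrite apiE received_exhaustion.
Qed.

Theorem theorem5 (R : realType) (n m : nat) (q : 'I_m -> R) (r : 'I_n -> R)
    (pi : 'I_n -> {perm 'I_m}) (eta : 'I_n -> R -> R) (api : 'I_n -> 'I_m -> R) :
  (forall j, 0 < q j) ->
  (forall i, 0 < r i) ->
  \sum_(j < m) q j = \sum_(i < n) r i ->
  speed_function r eta ->
  SG_outcome q eta pi api ->
  pareto_optimal q r pi api.
Proof.
move=> _ _ _ _ /SG_outcome_serial[tau [serial sumapi]].
exact: serial_pareto_optimal serial sumapi.
Qed.
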